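(* Let $K\neq0$ and let $(\mathcal M,\rho)$ be a semimetric space such that, if $K>0$, $\rho(A,B)+\rho(B,C)+\rho(A,C)<2\pi/\sqrt K$ for every triple of distinct points $A,B,C\in\mathcal M$. If $(\mathcal M,\rho)$ satisfies the one-sided four point $\operatorname{cosq}_K$ condition, then $\rho$ satisfies the triangle inequality, i.e. $(\mathcal M,\rho)$ is a metric space.
   Context: A semimetric space is a set with a symmetric nonnegative distance $\rho$ with $\rho(P,Q)=0$ iff $P=Q$ (no triangle inequality assumed). Let $\kappa=\sqrt{|K|}$. For $A\neq P$, $B\neq Q$ (with $\rho(A,P),\rho(B,Q),\rho(A,B)<\pi/\sqrt K$ if $K>0$), put $x=\rho(A,P)$, $y=\rho(B,Q)$, $a=\rho(A,B)$, $b=\rho(P,Q)$, $d=\rho(P,B)$, $f=\rho(A,Q)$ (points may coincide across the two pairs, e.g. $B=A$); for $K>0$ $$\operatorname{cosq}_K(\overrightarrow{AP},\overrightarrow{BQ})=\frac{\cos\kappa b+\cos\kappa x\cos\kappa y}{\sin\kappa x\sin\kappa y}-\frac{(\cos\kappa x+\cos\kappa d)(\cos\kappa y+\cos\kappa f)}{(1+\cos\kappa a)\sin\kappa x\sin\kappa y},$$ and for $K<0$ $$\operatorname{cosq}_K(\overrightarrow{AP},\overrightarrow{BQ})=\frac{(\cosh\kappa x+\cosh\kappa d)(\cosh\kappa y+\cosh\kappa f)}{(1+\cosh\kappa a)\sinh\kappa x\sinh\kappa y}-\frac{\cosh\kappa b+\cosh\kappa x\cosh\kappa y}{\sinh\kappa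 x\sinh\kappa y}.$$ Upper/lower four point $\operatorname{cosq}_K$ condition: $\operatorname{cosq}_K\le1$ / $\ge-1$ for all such quadruples; one-sided: at least one holds. *)

From Stdlib Require Import Reals.
Open Scope R_scope.

Definition semimetric {M : Type} (rho : M -> M -> R) : Prop :=
  (forall P Q, rho P Q = rho Q P) /\
  (forall P Q, 0 <= rho P Q) /\
  (forall P Q, rho P Q = 0 <-> P = Q).

Definition kappa (K : R) : R := sqrt (Rabs K).

(* cosq_K as a function of the six distances
   x = rho(A,P), y = rho(B,Q), a = rho(A,B), b = rho(P,Q),
   d = rho(P,B), f = rho(A,Q). *)
Definition cosq_val (K x y a b d f : R) : R :=
  let k := kappa K in
  if Rlt_dec 0 K then
    (cos (k*b) + cos (k*x) * cos (k*y)) / (sin (k*x) * sin (k*y))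
    - ((cos (k*x) + cos (k*d)) * (cos (k*y) + cos (k*f)))
      / ((1 + cos (k*a)) * sin (k*x) * sin (k*y))
  else
    ((cosh (k*x) + cosh (k*d)) * (cosh (k*y) + cosh (k*f)))
      / ((1 + cosh (k*a)) * sinh (k*x) * sinh (k*y))
    - (cosh (k*b) + cosh (k*x) * cosh (k*y)) / (sinh (k*x) * sinh (k*y)).

Definition cosq {M : Type} (K : R) (rho : M -> M -> R) (A P B Q : M) : R :=
  cosq_val K (rho A P) (rho B Q) (rho A B) (rho P Q) (rho P B) (rho A Q).

Definition admissible {M : Type} (K : R) (rho : M -> M -> R) (A P B Q : M) : Prop :=
  A <> P /\ B <> Q /\
  (0 < K -> rho A P < PI / sqrt K /\ rho B Q < PI / sqrt K /\ rho A B < PI / sqrt K).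

Definition upper_cosq_condition {M : Type} (K : R) (rho : M -> M -> R) : Prop :=
  forall A P B Q : M, admissible K rho A P B Q -> cosq K rho A P B Q <= 1.

Definition lower_cosq_condition {M : Type} (K : R) (rho : M -> M -> R) : Prop :=
  forall A P B Q : M, admissible K rho A P B Q -> -1 <= cosq K rho A P B Q.

Definition one_sided_cosq_condition {M : Type} (K : R) (rho : M -> M -> R) : Prop :=
  upper_cosq_condition K rho \/ lower_cosq_condition K rho.

Definition triangle_inequality {M : Type} (rho : M -> M -> R) : Prop :=
  forall A B C : M, rho A C <= rho A B + rho B C.

From Stdlib Require Import Reals Lra Classical.
Open Scope R_scope.

(* Fix distinct A, B, C and write x = rho(B,A), y = rho(B,C), w = rho(A,C),
   k = sqrt|K|.  On the degenerate quadruples (B,A,B,C) and (B,A,C,B) the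
   quantity cosq_K collapses to plus, resp. minus, the cosine of the angle at B
   of the triangle with sides x, y, w in the model plane of curvature K (law of
   cosines).  Either one-sided condition therefore says that this cosine is at
   least -1, i.e. cos(kw) >= cos(k(x + y)) if K > 0 and cosh(kw) <= cosh(k(x + y))
   if K < 0.  For K < 0 this is w <= x + y by monotonicity of cosh; for K > 0
   the perimeter bound k(x + y + w) < 2 pi rules out the other branch of the
   cosine, and also settles directly the case where kx or ky is at least pi. *)

Lemma kappa_pos K : K <> 0 -> 0 < kappa K.
Proof. intros HK. apply sqrt_lt_R0, Rabs_pos_lt, HK. Qed.

Lemma lt_div_sqrt_kappa K c x : 0 < K -> x < c / sqrt K <-> kappa K * x < c.
Proof.
  intros HK.
  assert (Hk : sqrt K = kappa K) by (unfold kappa; rewrite Rabs_right; lra).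
  assert (Hpos := kappa_pos K ltac:(lra)).
  rewrite Hk. split; intros H.
  - apply Rmult_lt_compat_l with (r := kappa K) in H; [|exact Hpos].
    now replace (kappa K * (c / kappa K)) with c in H by (field; lra).
  - apply Rmult_lt_reg_l with (kappa K); [exact Hpos|].
    now replace (kappa K * (c / kappa K)) with c by (field; lra).
Qed.

Lemma div_ge_neg1 t D : 0 < D -> -1 <= t / D -> -D <= t.
Proof.
  intros HD H. apply Rmult_le_compat_r with (r := D) in H; [|lra].
  replace (t / D * D) with t in H by (field; lra). lra.
Qed.

Lemma sinh_pos u : 0 < u -> 0 < sinh u.
Proof. intros Hu. rewrite <- sinh_0. apply sinh_lt, Hu. Qed.

Lemma cosh_plus u v : cosh (u + v) = cosh u * cosh v + sinh u * sinh v.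
Proof.
  unfold cosh, sinh. rewrite Ropp_plus_distr, !exp_plus.
  pose proof (exp_pos u). pose proof (exp_pos v).
  pose proof (exp_pos (- u)). pose proof (exp_pos (- v)). lra.
Qed.

Lemma cosh_increasing u v : 0 <= u -> u < v -> cosh u < cosh v.
Proof.
  intros Hu Huv. unfold cosh. rewrite !exp_Ropp.
  assert (Hab : exp u < exp v) by (apply exp_increasing, Huv).
  assert (Ha : 1 <= exp u) by (pose proof (exp_ineq1_le u); lra).
  set (a := exp u) in *. set (b := exp v) in *.
  (* (b + 1/b) - (a + 1/a) = (b - a) (ab - 1) / ab *)
  assert (0 < (b - a) * (a * b - 1)) by (apply Rmult_lt_0_compat; nra).
  apply Rmult_lt_reg_r with (2 * a * b); [nra|].
  replace ((a + / a) / 2 * (2 * a * b)) with (a * a * b + b) by (field; lra).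
  replace ((b + / b) / 2 * (2 * a * b)) with (b * b * a + a) by (field; lra).
  nra.
Qed.

Lemma cos_ge_cos_plus u v w :
  0 < u < PI -> 0 < v < PI -> 0 <= w -> u + v + w < 2 * PI ->
  cos (u + v) <= cos w -> w <= u + v.
Proof.
  intros Hu Hv Hw Hper H.
  destruct (Rle_lt_dec w (u + v)) as [|Hlt]; [assumption|exfalso].
  destruct (Rle_lt_dec w PI).
  - assert (cos w < cos (u + v)) by (apply cos_decreasing_1; lra). lra.
  - assert (cos (2 * PI - w) < cos (u + v)) by (apply cos_decreasing_1; lra).
    rewrite cos_minus, cos_2PI, sin_2PI in *. lra.
Qed.

(* The law of cosines in the model plane of curvature K: the cosine of the
   angle opposite to the side w in a triangle with sides x, y, w. *)
Definition comparison_angle_cos (K x y w : R) : R :=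
  let k := kappa K in
  if Rlt_dec 0 K then
    (cos (k * w) - cos (k * x) * cos (k * y)) / (sin (k * x) * sin (k * y))
  else
    (cosh (k * x) * cosh (k * y) - cosh (k * w)) / (sinh (k * x) * sinh (k * y)).

Section ComparisonAngle.

Variables K x y w : R.
Hypothesis HK : K <> 0.
Hypothesis Hx : 0 < x.
Hypothesis Hy : 0 < y.
Hypothesis Hx_short : 0 < K -> x < PI / sqrt K.
Hypothesis Hy_short : 0 < K -> y < PI / sqrt K.

Let k := kappa K.

Let Hk : 0 < k.
Proof. exact (kappa_pos K HK). Qed.

Let Hkx : 0 < K -> 0 < k * x < PI.
Proof. intros HKp. split; [nra|]. now apply lt_div_sqrt_kappa, Hx_short. Qed.

Let Hky : 0 < K -> 0 < k * y < PI.
Proof. intros HKp. split; [nra|]. now apply lt_div_sqrt_kappa, Hy_short. Qed.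

Let sin_sin_pos : 0 < K -> 0 < sin (k * x) * sin (k * y).
Proof.
  intros HKp. destruct (Hkx HKp), (Hky HKp).
  apply Rmult_lt_0_compat; apply sin_gt_0; lra.
Qed.

Let sinh_sinh_pos : 0 < sinh (k * x) * sinh (k * y).
Proof. apply Rmult_lt_0_compat; apply sinh_pos; nra. Qed.

Lemma cosq_val_vertex : cosq_val K x y 0 w x y = comparison_angle_cos K x y w.
Proof.
  unfold cosq_val, comparison_angle_cos; fold k.
  destruct (Rlt_dec 0 K) as [HKp|HKn].
  - specialize (sin_sin_pos HKp). rewrite Rmult_0_r, cos_0. field. nra.
  - rewrite Rmult_0_r, cosh_0. field. nra.
Qed.

Lemma cosq_val_reversed : cosq_val K x y y x w 0 = - comparison_angle_cos K x y w.
Proof.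
  unfold cosq_val, comparison_angle_cos; fold k.
  destruct (Rlt_dec 0 K) as [HKp|HKn].
  - specialize (sin_sin_pos HKp).
    assert (-1 < cos (k * y)) by (rewrite <- cos_PI; apply cos_decreasing_1; lra).
    rewrite Rmult_0_r, cos_0. field. split; nra.
  - assert (0 < cosh (k * y)).
    { unfold cosh. pose proof (exp_pos (k * y)). pose proof (exp_pos (- (k * y))). lra. }
    rewrite Rmult_0_r, cosh_0. field. split; nra.
Qed.

Lemma triangle_of_comparison_angle_cos :
  0 <= w -> (0 < K -> x + y + w < 2 * PI / sqrt K) ->
  -1 <= comparison_angle_cos K x y w -> w <= x + y.
Proof.
  intros Hw Hper H. unfold comparison_angle_cos in H; fold k in H.
  apply Rmult_le_reg_l with k; [exact Hk|].
  destruct (Rlt_dec 0 K) as [HKp|HKn].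
  - apply div_ge_neg1 in H; [|exact (sin_sin_pos HKp)].
    destruct (Hkx HKp), (Hky HKp).
    assert (k * (x + y + w) < 2 * PI) by now apply lt_div_sqrt_kappa, Hper.
    rewrite Rmult_plus_distr_l. apply cos_ge_cos_plus; [lra|lra|nra|lra|].
    rewrite cos_plus. lra.
  - apply div_ge_neg1 in H; [|exact sinh_sinh_pos].
    destruct (Rle_lt_dec (k * w) (k * (x + y))) as [|Hlt]; [assumption|exfalso].
    assert (cosh (k * (x + y)) < cosh (k * w)) by (apply cosh_increasing; nra).
    rewrite Rmult_plus_distr_l, cosh_plus in *. lra.
Qed.

End ComparisonAngle.

Lemma triangle_inequality_of_distinct {M : Type} (rho : M -> M -> R) :
  semimetric rho ->
  (forall A B C, A <> B -> B <> C -> A <> C -> rho A C <= rho A B + rho B C) ->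
  triangle_inequality rho.
Proof.
  intros [Hsym [Hnn Hz]] Hdist A B C.
  destruct (classic (A = B)) as [<-|HAB].
  { rewrite (proj2 (Hz A A) eq_refl). lra. }
  destruct (classic (B = C)) as [<-|HBC].
  { rewrite (proj2 (Hz B B) eq_refl). lra. }
  destruct (classic (A = C)) as [<-|HAC]; [|now apply Hdist].
  rewrite (proj2 (Hz A A) eq_refl). pose proof (Hnn A B). pose proof (Hnn B A). lra.
Qed.

Lemma semimetric_pos {M : Type} (rho : M -> M -> R) P Q :
  semimetric rho -> P <> Q -> 0 < rho P Q.
Proof.
  intros [_ [Hnn Hz]] HPQ. destruct (Hnn P Q) as [|E]; [assumption|].
  now apply eq_sym, Hz in E.
Qed.

Lemma le_add_of_long_side x y w L :
  0 <= x -> 0 <= y -> x + y + w < 2 * L -> ~ (x < L /\ y < L) -> w <= x + y.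
Proof. intros Hx Hy Hper Hlong. destruct (Rlt_le_dec x L), (Rlt_le_dec y L); tauto || lra. Qed.

Lemma one_sided_vertex_angle {M : Type} (K : R) (rho : M -> M -> R) (A B C : M) :
  K <> 0 -> semimetric rho -> one_sided_cosq_condition K rho ->
  A <> B -> B <> C ->
  (0 < K -> rho B A < PI / sqrt K /\ rho B C < PI / sqrt K) ->
  -1 <= comparison_angle_cos K (rho B A) (rho B C) (rho A C).
Proof.
  intros HK Hrho Hone HAB HBC Hshort.
  assert (Hx := semimetric_pos rho B A Hrho (not_eq_sym HAB)).
  assert (Hy := semimetric_pos rho B C Hrho HBC).
  destruct Hrho as [Hsym [_ Hz]].
  assert (HBB : rho B B = 0) by now apply Hz.
  assert (HpiK : 0 < K -> 0 < PI / sqrt K).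
  { intros HKp. apply Rdiv_lt_0_compat; [apply PI_RGT_0|apply sqrt_lt_R0, HKp]. }
  destruct Hone as [Hupper|Hlower].
  - assert (Hc : cosq K rho B A C B <= 1).
    { apply Hupper. repeat split; auto; rewrite ?(Hsym C B); apply Hshort; assumption. }
    unfold cosq in Hc. rewrite HBB, (Hsym C B), (Hsym A B) in Hc.
    rewrite cosq_val_reversed in Hc; try tauto. lra.
  - assert (Hc : -1 <= cosq K rho B A B C).
    { apply Hlower. repeat split; auto; try (apply Hshort; assumption).
      rewrite HBB. now apply HpiK. }
    unfold cosq in Hc. rewrite HBB, (Hsym A B) in Hc.
    rewrite cosq_val_vertex in Hc; tauto.
Qed.

Theorem mainTheorem16 (M : Type) (rho : M -> M -> R) (K : R) :
  K <> 0 ->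
  semimetric rho ->
  (0 < K -> forall A B C : M, A <> B -> B <> C -> A <> C ->
     rho A B + rho B C + rho A C < 2 * PI / sqrt K) ->
  one_sided_cosq_condition K rho ->
  triangle_inequality rho.
Proof.
  intros HK Hrho Hper Hone.
  apply triangle_inequality_of_distinct; [exact Hrho|]. intros A B C HAB HBC HAC.
  pose proof Hrho as [Hsym [Hnn _]].
  rewrite (Hsym A B).
  assert (HperB : 0 < K -> rho B A + rho B C + rho A C < 2 * PI / sqrt K).
  { intros HKp. rewrite (Hsym B A). now apply Hper. }
  destruct (classic (0 < K -> rho B A < PI / sqrt K /\ rho B C < PI / sqrt K))
    as [Hshort|[HKp Hlong]%imply_to_and].
  - apply (triangle_of_comparison_angle_cos K); auto using semimetric_pos, not_eq_sym.
    + intros HKp. apply Hshort, HKp.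
    + intros HKp. apply Hshort, HKp.
    + now apply one_sided_vertex_angle.
  - apply (le_add_of_long_side _ _ _ (PI / sqrt K)); auto.
    replace (2 * (PI / sqrt K)) with (2 * PI / sqrt K) by (unfold Rdiv; ring).
    now apply HperB.
Qed.
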